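(* Let $t$ be a positive integer, $s\ge 2$, and let $G=K(n_1,\dots,n_s)$ be a complete $s$-partite graph with $n_1\ge n_2\ge\cdots\ge n_s\ge 1$. Suppose exactly $r$ parts of $G$ have at least $2t$ vertices (so $n_1,\dots,n_r\ge 2t>n_{r+1}$), and let $\sigma_{r+1,s}=\sum_{j=r+1}^{s} n_j$. Then $$r+\left\lceil \frac{\sigma_{r+1,s}}{2t}\right\rceil\le \chi_t(G)\le r+\left\lceil \frac{\sigma_{r+1,s}}{t+1}\right\rceil.$$ Moreover both bounds are attained: for all integers $0\le r\le s$ with $s\ge 2$, the graph with $n_1=\cdots=n_r=2t+1$ and $n_{r+1}=\cdots=n_s=1$ attains the upper bound, and the graph with $n_1=\cdots=n_r=2t$ and $n_{r+1}=\cdots=n_s=t$ attains the lower bound.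
   Context: $K(n_1,\dots,n_s)$ denotes the complete $s$-partite graph whose parts have $n_1,\dots,n_s$ vertices. A map $f:V(G)\to\{1,\dots,k\}$ is a $t$-relaxed $k$-coloring if every vertex $u$ has at most $t$ neighbors $v$ with $f(v)=f(u)$; $\chi_t(G)$ is the minimum $k$ for which such a coloring exists. *)

From mathcomp Require Import all_boot.
Set Implicit Arguments. Unset Strict Implicit. Unset Printing Implicit Defensive.

(* Vertex set of the complete s-partite graph K(n_0,...,n_{s-1}):
   vertex (i, j) is the j-th vertex of part i. *)
Definition cmp_vert (s : nat) (n : 'I_s -> nat) : finType := {i : 'I_s & 'I_(n i)}.

Definition cmp_adj (s : nat) (n : 'I_s -> nat) : rel (cmp_vert n) :=
  fun u v => tag u != tag v.
Arguments cmp_adj {s} n.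

Definition relaxed_colorable (T : finType) (e : rel T) (t k : nat) : bool :=
  [exists f : {ffun T -> 'I_k},
     [forall u, #|[set v | e u v && (f v == f u)]| <= t]].

Lemma relaxed_colorable_exists (T : finType) (e : rel T) (t : nat) :
  irreflexive e -> exists k, relaxed_colorable e t k.
Proof.
move=> irr; exists #|T|; apply/existsP; exists [ffun u => enum_rank u].
apply/forallP => u.
suff -> : [set v | e u v && ([ffun u0 => enum_rank u0] v == [ffun u0 => enum_rank u0] u)] = set0
  by rewrite cards0.
apply/setP => v; rewrite !inE !ffunE.
case: eqP => [/enum_rank_inj -> | _]; first by rewrite irr.
by rewrite andbF.
Qed.

Lemma cmp_adj_irrefl (s : nat) (n : 'I_s -> nat) : irreflexive (cmp_adj n).
Proof. by move=> u; rewrite /cmp_adj eqxx. Qed.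

Definition chi_cmp (t s : nat) (n : 'I_s -> nat) : nat :=
  ex_minn ((@relaxed_colorable_exists _ _ t (@cmp_adj_irrefl s n))).

Definition ceil_div (a b : nat) : nat := (a + b.-1) %/ b.

(* sigma_{r+1,s}: sum of the sizes of parts with (0-based) index >= r *)
Definition sigma_from (s : nat) (n : 'I_s -> nat) (r : nat) : nat :=
  \sum_(i < s | r <= i) n i.

From mathcomp Require Import all_boot zify.
Set Implicit Arguments. Unset Strict Implicit. Unset Printing Implicit Defensive.

(* A colour class of a t-relaxed colouring of a complete multipartite graph
   either lies inside one part or has at most 2t vertices: each of its vertices
   sees at most t class members outside its own part.  Weighting the first 2t
   vertices of every part by 1, every class weighs at most 2t while the graph
   weighs 2tr + sigma, which gives the lower bound.  For the upper bound give
   each big part its own colour and cut the small vertices, listed in any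
   order, into blocks of t+1.  The first extremal family is handled by
   weighting big vertices 1/(2t+1) and small ones 1/(t+1) (a class containing
   a small vertex has at most t+1 vertices); in the second one, pairing up the
   small parts of size t matches the lower bound. *)

Lemma leq_ceil_divL d m k : 0 < d -> (ceil_div m d <= k) = (m <= k * d).
Proof. by move=> d0; rewrite /ceil_div -ltnS ltn_divLR //; lia. Qed.

Lemma ltn_div_ceil_div d a b : 0 < d -> a < b -> a %/ d < ceil_div b d.
Proof.
by move=> d0 ab; rewrite ltnNge leq_ceil_divL //; have := leq_divM a d; lia.
Qed.

Lemma leq_add_ceil_div d r x k : 0 < d -> r * d + x <= k * d -> r + ceil_div x d <= k.
Proof.
move=> d0 h; have rk : r <= k by rewrite -(leq_pmul2r d0); lia.
by rewrite -leq_subRL // leq_ceil_divL // mulnBl leq_subRL ?leq_pmul2r.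
Qed.

Lemma ceil_div_pmul2r d m t : 0 < d -> 0 < t -> ceil_div (m * t) (d * t) = ceil_div m d.
Proof.
move=> d0 t0; have le_iff k : (ceil_div (m * t) (d * t) <= k) = (ceil_div m d <= k).
  by rewrite !leq_ceil_divL ?muln_gt0 ?d0 // mulnA leq_pmul2r.
by apply/eqP; rewrite eqn_leq le_iff leqnn -le_iff leqnn.
Qed.

Lemma sum_ord_ltn m a : \sum_(j < m) (j < a) = minn m a.
Proof. by elim: m => [|m IH]; rewrite ?big_ord0 ?big_ord_recr /= ?IH; lia. Qed.

Lemma sum_ord_if s r a b : r <= s ->
  \sum_(i < s) (if i < r then a else b) = r * a + (s - r) * b.
Proof.
move=> rs; rewrite -(big_mkord xpredT (fun i => if i < r then a else b)).
rewrite (@big_cat_nat _ _ _ r 0 s _ _ (leq0n r) rs) /=.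
rewrite (eq_big_nat _ _ (F2 := fun _ => a)); last by move=> i /andP[_ ->].
rewrite [X in _ + X](eq_big_nat _ _ (F2 := fun _ => b)); last first.
  by move=> i /andP[]; rewrite leqNgt => /negbTE ->.
by rewrite !sum_nat_const_nat subn0.
Qed.

Lemma relaxed_colorable_nat (T : finType) (e : rel T) t k (g : T -> nat) :
  (forall v, g v < k) -> (forall u, #|[set v | e u v && (g v == g u)]| <= t) ->
  relaxed_colorable e t k.
Proof.
move=> gk gt; apply/existsP; exists [ffun v => Ordinal (gk v)].
by apply/forallP => u; under eq_finset => v do rewrite !ffunE.
Qed.

Lemma card_index_div_le (T : finType) (xs : seq T) d q :
  #|[set x | (x \in xs) && (index x xs %/ d.+1 == q)]| <= d.+1.
Proof.
rewrite -[X in _ <= X]card_ord.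
apply: (@leq_card_in _ _ (fun x => inord (index x xs %% d.+1))) => x y.
rewrite !inE => /andP[xxs /eqP qx] /andP[yxs /eqP qy] /(congr1 val).
rewrite /= !inordK ?ltn_pmod // => m.
apply: (index_inj x xxs yxs).
by rewrite (divn_eq (index x xs) d.+1) (divn_eq (index y xs) d.+1) qx qy m.
Qed.

Section CompleteMultipartite.
Variables (s : nat) (n : 'I_s -> nat).
Local Notation V := (cmp_vert n).
Local Notation vert i j := (Tagged (fun i => 'I_(n i)) (j : 'I_(n i))).

Lemma sum_cmp_vert (F : V -> nat) : \sum_v F v = \sum_(i < s) \sum_(j < n i) F (vert i j).
Proof. by rewrite sig_big_dep; apply: eq_bigr => -[]. Qed.

Lemma sum_in_part_le (A : {set V}) i (F : V -> nat) :
  {in A, forall v, tag v = i} -> \sum_(v in A) F v <= \sum_(j < n i) F (vert i j).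
Proof.
move=> Ai; rewrite big_mkcond.
apply: (@leq_trans (\sum_v if tag v == i then F v else 0)).
  by apply: leq_sum => v _; case: ifP => // /Ai ->; rewrite eqxx.
rewrite sum_cmp_vert (bigD1 i) //= [X in _ + X]big1 ?addn0.
  by apply: eq_leq; apply: eq_bigr => j _; rewrite /= eqxx.
by move=> i' /negbTE i'i; apply: big1 => j _; rewrite /= i'i.
Qed.

Lemma card_in_part_le (A : {set V}) i : {in A, forall v, tag v = i} -> #|A| <= n i.
Proof.
by move=> /(sum_in_part_le (fun _ => 1)); rewrite sum1_card sum_nat_const card_ord muln1.
Qed.

Variable t : nat.

Definition relaxed_class (A : {set V}) : Prop :=
  {in A, forall u, #|[set v in A | tag v != tag u]| <= t}.

Lemma relaxed_class_card A u : relaxed_class A -> u \in A -> #|A| <= n (tag u) + t.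
Proof.
move=> hA uA; rewrite -(cardsID [set v | tag v == tag u] A); apply: leq_add.
  by apply: card_in_part_le => v; rewrite !inE => /andP[_ /eqP].
apply: leq_trans (hA u uA); apply: subset_leq_card; apply/subsetP => v.
by rewrite !inE andbC.
Qed.

Lemma relaxed_class_in_part_or_small A : relaxed_class A ->
  (exists i, {in A, forall v, tag v = i}) \/ #|A| <= 2 * t.
Proof.
move=> hA.
case: (pickP [pred p : V * V | [&& p.1 \in A, p.2 \in A & tag p.1 != tag p.2]]).
  move=> [u w] /and3P[/= uA wA tuw]; right.
  rewrite -(cardsID [set v | tag v == tag u] A) mul2n -addnn; apply: leq_add.
    apply: leq_trans (hA w wA); apply: subset_leq_card; apply/subsetP => v.
    by rewrite !inE => /andP[-> /eqP ->].
  apply: leq_trans (hA u uA); apply: subset_leq_card; apply/subsetP => v.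
  by rewrite !inE andbC.
case: (set_0Vmem A) => [-> _ | [u uA] single]; first by right; rewrite cards0.
left; exists (tag u) => v vA; apply/eqP; move: (single (v, u)).
by rewrite /= vA uA => /negbT; rewrite negbK.
Qed.

Lemma chi_cmp_min k : relaxed_colorable (cmp_adj n) t k -> chi_cmp t n <= k.
Proof. by rewrite /chi_cmp; case: ex_minnP => m _; apply. Qed.

Lemma weight_le_chi_cmp (w : V -> nat) B :
  (forall A, relaxed_class A -> \sum_(v in A) w v <= B) -> \sum_v w v <= chi_cmp t n * B.
Proof.
move=> hB; rewrite /chi_cmp; case: ex_minnP => k /existsP[f /forallP hf] _.
rewrite (partition_big f xpredT) //= -[k in k * B]card_ord -sum_nat_const.
apply: leq_sum => c _; rewrite -big_set /=.
apply: hB => u; rewrite inE => /eqP/val_inj <-; apply: leq_trans (hf u); apply: eq_leq.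
by apply: eq_card => v; rewrite !inE /cmp_adj andbC eq_sym.
Qed.

Lemma chi_cmp_le_split_first_parts (r k : nat) (h : V -> nat) :
  (forall v : V, r <= tag v -> h v < k) ->
  (forall u : V, r <= tag u ->
     #|[set v | cmp_adj n u v && (r <= tag v) && (h v == h u)]| <= t) ->
  chi_cmp t n <= r + k.
Proof.
move=> hk ht; pose g := fun v : V => if tag v < r then nat_of_ord (tag v) else r + h v.
apply/chi_cmp_min/(@relaxed_colorable_nat _ _ _ _ g) => [v | u].
  rewrite /g; case: (ltnP (tag v) r) => [vr | /hk hv]; first exact: ltn_addr.
  by rewrite ltn_add2l.
rewrite /g; case: (ltnP (tag u) r) => ur.
  rewrite (_ : [set v | _] = set0) ?cards0 //; apply/setP => v; rewrite !inE.
  apply/negP => /andP[adj]; case: (ltnP (tag v) r) => vr /eqP e; last by lia.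
  by move: adj; rewrite /cmp_adj (ord_inj e) eqxx.
apply: leq_trans (ht u ur); apply: subset_leq_card; apply/subsetP => v.
rewrite !inE; case: (ltnP (tag v) r) => vr /andP[-> /eqP e]; first by lia.
by apply/eqP; lia.
Qed.

Lemma sum_minn_le_chi_cmp : \sum_(i < s) minn (n i) (2 * t) <= chi_cmp t n * (2 * t).
Proof.
have -> : \sum_(i < s) minn (n i) (2 * t) = \sum_(v : V) (tagged v < 2 * t).
  by rewrite sum_cmp_vert; apply: eq_bigr => i _; rewrite sum_ord_ltn.
apply: weight_le_chi_cmp => A /relaxed_class_in_part_or_small [[i Ai] | small].
  by apply: leq_trans (sum_in_part_le _ Ai) _; rewrite sum_ord_ltn geq_minr.
by apply: leq_trans small; rewrite -sum1_card; apply: leq_sum => v _; apply: leq_b1.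
Qed.

Lemma card_parts_from r : #|[set v : V | r <= tag v]| = sigma_from n r.
Proof.
rewrite -sum1_card big_mkcond sum_cmp_vert /sigma_from [RHS]big_mkcond.
apply: eq_bigr => i _; under eq_bigr => j _ do rewrite inE /=.
by case: (r <= i); rewrite sum_nat_const card_ord ?muln1 ?muln0.
Qed.

Lemma chi_cmp_upper r : chi_cmp t n <= r + ceil_div (sigma_from n r) t.+1.
Proof.
pose xs := enum [set v : V | r <= tag v].
apply: (@chi_cmp_le_split_first_parts r _ (fun v => index v xs %/ t.+1)) => [v vr | u ur].
  rewrite -card_parts_from cardE; apply: ltn_div_ceil_div => //.
  by rewrite index_mem mem_enum inE.
set X := [set v | _]; have uX : u \notin X by rewrite inE /cmp_adj eqxx.
rewrite -ltnS; apply: (@leq_trans #|u |: X|); first by rewrite cardsU1 uX.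
apply: leq_trans (card_index_div_le xs t (index u xs %/ t.+1)).
apply: subset_leq_card; apply/subsetP => v; rewrite !inE mem_enum inE.
by case/predU1P => [-> | /andP[/andP[_ ->] ->]]; rewrite ?ur ?eqxx.
Qed.

Lemma chi_cmp_upper_pairs r :
  (forall i : 'I_s, r <= i -> n i <= t) -> chi_cmp t n <= r + ceil_div (s - r) 2.
Proof.
move=> small; apply: (@chi_cmp_le_split_first_parts r _ (fun v => (tag v - r) %/ 2)).
  by move=> v vr; apply: ltn_div_ceil_div => //; have := ltn_ord (tag v); lia.
move=> u ur.
set X := [set v | _]; case: (set_0Vmem X) => [-> | [v0 v0X]]; first by rewrite cards0.
have in_X v : v \in X ->
    [/\ r <= tag v, (tag v - r) %/ 2 = (tag u - r) %/ 2 & tag v != tag u :> nat].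
  by rewrite !inE /cmp_adj eq_sym => /andP[/andP[-> ->] /eqP].
have [rv0 hv0 tv0] := in_X v0 v0X.
apply: leq_trans (small _ rv0); apply: card_in_part_le => v /in_X [rv hv tv].
by apply: ord_inj; move: tv tv0 => /eqP tv /eqP tv0; lia.
Qed.
End CompleteMultipartite.

Lemma sigma_from_if s r a b : r <= s ->
  sigma_from (fun i : 'I_s => if i < r then a else b) r = (s - r) * b.
Proof.
move=> rs; have := sum_ord_if 0 b rs; rewrite muln0 add0n => <-.
by rewrite /sigma_from big_mkcond; apply: eq_bigr => i _; rewrite leqNgt; case: (i < r).
Qed.

Lemma sum_minn_parts t s (n : 'I_s -> nat) r : r <= s ->
  (forall i : 'I_s, (i < r) = (2 * t <= n i)) ->
  \sum_(i < s) minn (n i) (2 * t) = r * (2 * t) + sigma_from n r.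
Proof.
move=> rs hr; have := sum_ord_if (2 * t) 0 rs; rewrite muln0 addn0 => <-.
rewrite /sigma_from [X in _ + X]big_mkcond -big_split.
apply: eq_bigr => i _ /=; rewrite [r <= i]leqNgt hr.
by case: (leqP (2 * t) (n i)) => /= ?; lia.
Qed.

Lemma chi_cmp_lower t s (n : 'I_s -> nat) r : 0 < t -> r <= s ->
  (forall i : 'I_s, (i < r) = (2 * t <= n i)) ->
  r + ceil_div (sigma_from n r) (2 * t) <= chi_cmp t n.
Proof.
move=> t0 rs hr; apply: leq_add_ceil_div; first by rewrite muln_gt0.
by rewrite -sum_minn_parts // sum_minn_le_chi_cmp.
Qed.

Lemma chi_cmp_attains_upper t s r : r <= s ->
  let n := fun i : 'I_s => if i < r then (2 * t).+1 else 1 in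
  chi_cmp t n = r + ceil_div (sigma_from n r) t.+1.
Proof.
move=> rs n; apply/eqP; rewrite eqn_leq chi_cmp_upper /= sigma_from_if // muln1.
apply: (leq_add_ceil_div (ltn0Sn t)); rewrite -(leq_pmul2r (ltn0Sn (2 * t))).
pose w := fun v : cmp_vert n => if tag v < r then t.+1 else (2 * t).+1.
have -> : (r * t.+1 + (s - r)) * (2 * t).+1 = \sum_v w v.
  rewrite sum_cmp_vert /w /=; under eq_bigr => i _ do rewrite sum_nat_const card_ord /n.
  rewrite (eq_bigr (fun i : 'I_s => if i < r then (2 * t).+1 * t.+1 else (2 * t).+1)).
    by rewrite sum_ord_if // mulnDl -mulnA [t.+1 * _]mulnC.
  by move=> i _; case: (i < r); rewrite ?mul1n.
rewrite -mulnA [_ * (2 * t).+1]mulnC; apply: weight_le_chi_cmp => A hA.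
case: (pickP [pred v in A | r <= tag v]) => [y /andP[yA ry] | bigA].
  have := relaxed_class_card hA yA; rewrite /n ltnNge ry /= add1n => cardA.
  apply: (@leq_trans (\sum_(v in A) (2 * t).+1)).
    by apply: leq_sum => v _; rewrite /w; case: (tag v < r); lia.
  by rewrite sum_nat_const mulnC leq_pmul2l.
have w_big v : v \in A -> w v = t.+1.
  by move=> vA; move: (bigA v); rewrite /= vA /w => /negbT; rewrite -ltnNge => ->.
rewrite (eq_bigr _ w_big) sum_nat_const leq_pmul2r //.
case: (relaxed_class_in_part_or_small hA) => [[i Ai] | small]; last exact: leqW.
by apply: leq_trans (card_in_part_le Ai) _; rewrite /n; case: (i < r).
Qed.

Lemma chi_cmp_attains_lower t s r : 0 < t -> r <= s ->
  let n := fun i : 'I_s => if i < r then 2 * t else t in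
  chi_cmp t n = r + ceil_div (sigma_from n r) (2 * t).
Proof.
move=> t0 rs n; have hr (i : 'I_s) : (i < r) = (2 * t <= n i).
  by rewrite /n; case: (i < r); lia.
apply/eqP; rewrite eqn_leq chi_cmp_lower // andbT sigma_from_if // ceil_div_pmul2r //.
by apply: chi_cmp_upper_pairs => i; rewrite /n ltnNge => ->.
Qed.

Theorem theorem2p4 (t : nat) (ht : 0 < t) :
  (forall (s : nat) (n : 'I_s -> nat) (r : nat),
      2 <= s ->
      (forall i j : 'I_s, i <= j -> n j <= n i) ->
      (forall i : 'I_s, 0 < n i) ->
      r <= s ->
      (forall i : 'I_s, (i < r) = (2 * t <= n i)) ->
      r + ceil_div (sigma_from n r) (2 * t) <= chi_cmp t n
      /\ chi_cmp t n <= r + ceil_div (sigma_from n r) t.+1)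
  /\
  (forall s r : nat, 2 <= s -> r <= s ->
      let n := fun i : 'I_s => if i < r then (2 * t).+1 else 1 in
      chi_cmp t n = r + ceil_div (sigma_from n r) t.+1)
  /\
  (forall s r : nat, 2 <= s -> r <= s ->
      let n := fun i : 'I_s => if i < r then 2 * t else t in
      chi_cmp t n = r + ceil_div (sigma_from n r) (2 * t)).
Proof.
split; [|split].
- by move=> s n r _ _ _ rs hr; rewrite chi_cmp_lower // chi_cmp_upper.
- by move=> s r _; apply: chi_cmp_attains_upper.
- by move=> s r _; apply: chi_cmp_attains_lower.
Qed.
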